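(* Consider a neutral evolutionary model on $N$ sites given by a replacement rule $p$ satisfying the fixation assumption described in the context. Let $\mathbf{a}_0=(1,2,\ldots,N)$ be the initial state of the ancestral Markov chain. Then for each site $i$, $$\rho_i=\lim_{t\to\infty}\Pr_{(\mathcal{A},\mathbf{a}_0)}\big[\mathbf{a}(t)=(i,\ldots,i)\big],$$ where $\mathbf{a}(t)$ is the state of the ancestral Markov chain at time $t$ started from $\mathbf{a}_0$.
   Context: There are $N$ sites $1,\ldots,N$. A replacement event is a pair $(R,\alpha)$ with $R\subseteq\{1,\ldots,N\}$ and $\alpha:R\to\{1,\ldots,N\}$. A replacement rule is a probability distribution $p(R,\alpha)$ on replacement events, independent of the state. For any finite alphabet $T$, the associated Markov chain on $T^N$ evolves as follows: at each time-step an event $(R,\alpha)$ is drawn with probability $p(R,\alpha)$ and the state $\mathbf{s}$ becomes $\mathbf{s}'$ with $s_i'=s_i$ if $i\notin R$ and $s_i'=s_{\alpha(i)}$ if $i\in R$. The evolutionary Markov chain $\mathcal{M}$ is this chain with alphabet $\{\mathrm{M},\mathrm{R}\}$; the ancestral Markov chain $\mathcal{A}$ is this chain with alphabet $\{1,\ldots,N\}$. Fixation assumption: there exist a site $i$ and a finite sequence of replacement events, each of positive probability, such that if these events occur consecutively (from any initial state) every site ends up carrying the symbol initially at site $i$. The site-specific fixation probability is $\rho_i=\lim_{t\to\infty}\Pr_{(\mathcal{M},\mathbf{m}_i)}[\mathbf{s}(t)=(\mathrm{M},\ldots,\mathrm{M})]$, where $\mathbf{m}_i$ is the state with M at site $i$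 and R at all other sites. *)

From HB Require Import structures.
From mathcomp Require Import all_boot all_order all_algebra.
From mathcomp Require Import all_classical all_reals all_analysis.
Set Implicit Arguments. Unset Strict Implicit. Unset Printing Implicit Defensive.
Import Order.TTheory GRing.Theory Num.Theory.
Import numFieldNormedType.Exports.
Local Open Scope classical_set_scope.
Local Open Scope ring_scope.

(* A replacement event (R, alpha) with R a set of sites and
   alpha : R -> sites is encoded bijectively as a finite function
   e : 'I_N -> option 'I_N, with e i = None iff i \notin R, and
   e i = Some (alpha i) iff i \in R. *)
Definition event (N : nat) := {ffun 'I_N -> option 'I_N}.

Definition in_R N (e : event N) (i : 'I_N) : bool := e i != None.

Definition state N (T : finType) := {ffun 'I_N -> T}.

Definition apply_event N (T : finType) (e : event N) (s : state N T) : state N T :=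
  [ffun i => match e i with None => s i | Some j => s j end].

Definition apply_events N (T : finType) (es : seq (event N)) (s : state N T) :=
  foldl (fun s e => apply_event e s) s es.

Definition is_rule (R : realType) N (p : event N -> R) : Prop :=
  (forall e, 0 <= p e) /\ \sum_(e : event N) p e = 1.

Definition fixation_assumption (R : realType) N (p : event N -> R) : Prop :=
  exists (i : 'I_N) (es : seq (event N)),
    all (fun e => 0 < p e) es /\
    forall (T : finType) (s : state N T),
      apply_events es s = [ffun _ => s i].

(* Law at time t of the Markov chain with alphabet T started at s0:
   dist p s0 t s = Pr[s(t) = s]. *)
Fixpoint dist (R : realType) N (T : finType) (p : event N -> R)
    (s0 : state N T) (t : nat) : state N T -> R :=
  match t with
  | 0 => fun s => if s == s0 then 1 else 0
  | t'.+1 => fun s' =>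
      \sum_(s : state N T) dist p s0 t' s *
        \sum_(e : event N | apply_event e s == s') p e
  end.

(* Evolutionary chain M: alphabet {M, R} encoded as bool, true = M (mutant),
   false = R (resident). *)
Definition mutant : bool := true.
Definition resident : bool := false.

Definition m_state N (i : 'I_N) : state N bool :=
  [ffun j => if j == i then mutant else resident].

Definition all_mutant N : state N bool := [ffun _ => mutant].

(* Ancestral chain A: alphabet 'I_N; a0 = (1,...,N) i.e. site j carries j. *)
Definition a0 N : state N 'I_N := [ffun j => j].

Definition const_state N (i : 'I_N) : state N 'I_N := [ffun _ => i].

Definition rho (R : realType) N (p : event N -> R) (i : 'I_N) : R :=
  lim ((fun t => dist p (m_state i) t (all_mutant N)) @ \oo).

From HB Require Import structures.
From mathcomp Require Import all_boot all_order all_algebra.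
From mathcomp Require Import all_classical all_reals all_analysis.
Import Order.TTheory GRing.Theory Num.Theory.
Import numFieldNormedType.Exports.
Local Open Scope classical_set_scope.
Local Open Scope ring_scope.

(* Replacement events only copy symbols between sites, so they commute with
   any relabelling of the alphabet.  Relabelling the ancestral chain by
   "is the ancestor i?" therefore turns it, started at a0, into the
   evolutionary chain started at m_i, and the event "everybody descends from
   i" into "everybody is a mutant".  The latter state is absorbing, so its
   probability is nondecreasing in t and bounded by 1, hence convergent. *)

Lemma sum_fiber {V : nmodType} {I J : finType} (g : I -> J) (Q : pred J)
    (F : I -> V) :
  \sum_(j | Q j) \sum_(i | g i == j) F i = \sum_(i | Q (g i)) F i.
Proof.
rewrite (partition_big g Q) //=; apply: eq_bigr => j Qj; apply: eq_bigl => i.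
by case: (eqVneq (g i) j) => [->|]; rewrite ?Qj ?andbF.
Qed.

Definition map_state {N : nat} {T T' : finType} (g : T -> T') (s : state N T) :
  state N T' := [ffun j => g (s j)].

Lemma apply_event_map N (T T' : finType) (g : T -> T') e (s : state N T) :
  map_state g (apply_event e s) = apply_event e (map_state g s).
Proof. by apply/ffunP => j; rewrite !ffunE; case: (e j) => [k|]; rewrite ?ffunE. Qed.

Lemma apply_event_const N (T : finType) e (x : T) :
  apply_event e ([ffun _ => x] : state N T) = [ffun _ => x].
Proof. by apply/ffunP => j; rewrite !ffunE; case: (e j) => [k|]; rewrite ?ffunE. Qed.

Section ChainLaw.
Variables (R : realType) (N : nat) (p : event N -> R).

Lemma dist_map_state (T T' : finType) (g : T -> T') (s0 : state N T) t s' :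
  dist p (map_state g s0) t s' = \sum_(s | map_state g s == s') dist p s0 t s.
Proof.
set f := map_state g.
elim: t s' => [|t IH] s' /=.
  case: (eqVneq s' (f s0)) => [->|ne].
    by rewrite (bigD1 s0) //= eqxx big1 ?addr0 // => s /andP[_ /negbTE ->].
  rewrite big1 // => s /eqP fs; case: (eqVneq s s0) => // ess.
  by rewrite -fs ess eqxx in ne.
rewrite (eq_bigr (fun u => \sum_(s | f s == u) dist p s0 t s *
    \sum_(e | apply_event e (f s) == s') p e)); last first.
  by move=> u _; rewrite IH big_distrl; apply: eq_bigr => s /eqP ->.
rewrite (sum_fiber f xpredT (fun s => dist p s0 t s *
    \sum_(e | apply_event e (f s) == s') p e)) /=.
rewrite exchange_big /=; apply: eq_bigr => u _; rewrite -big_distrr /=.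
congr (_ * _).
rewrite (sum_fiber (fun e => apply_event e u) (fun s => f s == s') p).
by apply: eq_bigl => e; rewrite /f apply_event_map.
Qed.

Hypothesis hp : is_rule p.

Lemma dist_ge0 {T : finType} (s0 : state N T) t s : 0 <= dist p s0 t s.
Proof.
have [hp0 _] := hp.
elim: t s => [|t IH] s /=; first by case: (_ == _).
by apply: sumr_ge0 => u _; apply: mulr_ge0 => //; apply: sumr_ge0.
Qed.

Lemma dist_sum1 {T : finType} (s0 : state N T) t : \sum_s dist p s0 t s = 1.
Proof.
have [_ hp1] := hp.
elim: t => [|t IH] /=.
  by rewrite (bigD1 s0) //= eqxx big1 ?addr0 // => s /negbTE ->.
rewrite exchange_big /= -[RHS]IH; apply: eq_bigr => s _.
rewrite -big_distrr /= -[RHS]mulr1 -hp1; congr (_ * _).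
by rewrite (sum_fiber (fun e => apply_event e s) xpredT p).
Qed.

Lemma dist_le1 {T : finType} (s0 : state N T) t s : dist p s0 t s <= 1.
Proof.
rewrite -(dist_sum1 s0 t) (bigD1 s) //= lerDl.
by apply: sumr_ge0 => *; apply: dist_ge0.
Qed.

Section Absorbing.
Variables (T : finType) (s0 A : state N T).
Hypothesis A_absorbing : forall e, apply_event e A = A.

Lemma dist_absorbingS t : dist p s0 t A <= dist p s0 t.+1 A.
Proof.
have [_ hp1] := hp.
rewrite /= (bigD1 A) //=.
have -> : \sum_(e | apply_event e A == A) p e = 1.
  by rewrite -hp1; apply: eq_bigl => e; rewrite A_absorbing eqxx.
rewrite mulr1 lerDl; apply: sumr_ge0 => s _.
by apply: mulr_ge0; [apply: dist_ge0 | apply: sumr_ge0 => e _; case: hp].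
Qed.

Lemma dist_absorbing_cvg : cvg ((fun t => dist p s0 t A) @ \oo).
Proof.
apply: nondecreasing_is_cvgn; first exact/nondecreasing_seqP/dist_absorbingS.
by exists 1 => _ [t _ <-]; apply: dist_le1.
Qed.

End Absorbing.
End ChainLaw.

Lemma map_state_a0 N (i : 'I_N) : map_state (pred1 i) (a0 N) = m_state i.
Proof. by apply/ffunP => j; rewrite !ffunE /=; case: (j == i). Qed.

Lemma map_state_eq_all_mutant N (i : 'I_N) (a : state N 'I_N) :
  (map_state (pred1 i) a == all_mutant N) = (a == const_state i).
Proof.
rewrite /map_state /all_mutant /mutant.
apply/eqP/eqP => [h|->]; apply/ffunP => j; rewrite !ffunE /=; last exact: eqxx.
by have := congr1 (fun s : state N bool => s j) h; rewrite !ffunE => /eqP.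
Qed.

Lemma dist_ancestral_fixation (R : realType) N (p : event N -> R) (i : 'I_N) t :
  dist p (a0 N) t (const_state i) = dist p (m_state i) t (all_mutant N).
Proof.
rewrite -map_state_a0 dist_map_state.
by rewrite (eq_bigl (pred1 (const_state i))) ?big_pred1_eq // => a;
  rewrite /= map_state_eq_all_mutant.
Qed.

(* The fixation assumption only ensures that the limit is a genuine fixation
   probability (the rho_i sum to 1); the identity itself does not need it. *)
Theorem mainTheorem5 (R : realType) (N : nat) (p : event N -> R) :
  is_rule p -> fixation_assumption p ->
  forall i : 'I_N,
    cvg ((fun t => dist p (m_state i) t (all_mutant N)) @ \oo) /\
    ((fun t => dist p (a0 N) t (const_state i)) @ \oo --> rho p i).
Proof.
move=> hp _ i.
have cvg_rho : cvg ((fun t => dist p (m_state i) t (all_mutant N)) @ \oo).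
  by apply: dist_absorbing_cvg => // e; apply: apply_event_const.
split=> //.
under eq_fun do rewrite dist_ancestral_fixation.
exact: cvg_rho.
Qed.
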